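(* Assume the standing hypotheses (P) described in the context and let $\epsilon>0$. For every $\eta\in(0,\frac\beta2)$ there exists $\zeta>0$, depending only on $\epsilon$, $\beta$ and $\tilde H(\epsilon)$ (and independent of $n$), such that for every $\phi\in\mathcal H^{pot}(\epsilon)$ that is not $(\frac\beta2-\eta)$-strongly convex it holds that $P^{(\beta/2)}(\phi)\ge\zeta$.
   Context: Let $d\in\mathbb N$; $\lambda$ is the restriction of Lebesgue measure to $[0,1]^d$, $G_{\#}\lambda$ the pushforward. $\mu^*$ is a probability measure on $[0,1]^d$ with Lebesgue density $p^*$, $p^*>0$ on $[0,1]^d$, $p^*=0$ outside. Neural networks with architecture $(l_0,\dots,l_L)$ and activation $\sigma$ realize $x_0\mapsto W_Lx_{L-1}+B_L$, $x_k=\sigma(W_kx_{k-1}+B_k)$; ReCU: $\sigma(x)=\max\{x,0\}^3$. $C^{k,\alpha}$ are Hölder spaces on $[0,1]^d$ with norms $\|\cdot\|_{C^{k,\alpha}}$; $A\ge B$ means $A-B$ positive semidefinite; $d_{JS}$ is the Jensen–Shannon divergence. Hypotheses (P): $p^*\in C^{1,\alpha}([0,1]^d,\mathbb R)$ for some $\alpha\in(0,1)$; $\phi^*\in C^{3,\alpha}([0,1]^d,\mathbb R)$ is the Brenier potential with $\mu^*=(\nabla\phi^* )_{\#}\lambda$; $M\in(1,\infty)$ with $\frac1M\operatorname{Id}\le\operatorname{Hess}\phi^*\le M\operatorname{Id}$ on $[0,1]^d$, and $\beta:=1/M$. For each $\epsilon>0$, $\phi_\epsilon$ is a ReCU network $[0,1]^d\to\mathbb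 R$ with $\frac1{2M}\operatorname{Id}\le\operatorname{Hess}\phi_\epsilon\le2M\operatorname{Id}$ on $[0,1]^d$ and $d_{JS}(\mu^*,(\nabla\phi_\epsilon)_{\#}\lambda)\le\epsilon$, $\mathcal A^\phi(\epsilon)$ is its architecture, $H(\epsilon)=\|\phi_\epsilon\|_{C^{2,1}}$, $\tilde H(\epsilon)\ge H(\epsilon)$ is fixed, and $\mathcal H^{pot}(\epsilon)$ is the set of all ReCU networks $\phi\colon[0,1]^d\to\mathbb R$ with architecture $\mathcal A^\phi(\epsilon)$ and $\|\phi\|_{C^{2,1}([0,1]^d)}\le\tilde H(\epsilon)$. A function $\phi$ on $[0,1]^d$ is $\kappa$-strongly convex if $\phi(\frac{u+u'}2)\le\frac{\phi(u)+\phi(u')}2-\frac\kappa8\|u-u'\|^2$ for all $u,u'\in[0,1]^d$ (equivalently $\phi+\frac\kappa2\|\cdot\|^2$ is convex). For $\kappa>0$ and $\phi\colon[0,1]^d\to\mathbb R$, $P^{(\kappa)}(\phi)=\int_{([0,1]^d)^2}\mathrm{ReLU}\big(\phi(\frac{u+u'}2)-\frac{\phi(u)+\phi(u')}2+\frac\kappa8\|u-u'\|^2\big)\,du\,du'$, where $\mathrm{ReLU}(x)=\max\{x,0\}$. *)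

From HB Require Import structures.
From mathcomp Require Import all_boot all_order all_algebra.
From mathcomp Require Import all_classical all_reals all_analysis.
Set Implicit Arguments. Unset Strict Implicit. Unset Printing Implicit Defensive.
Import Order.TTheory GRing.Theory Num.Theory.
Import numFieldNormedType.Exports.
Local Open Scope classical_set_scope.
Local Open Scope ring_scope.

Section Defs.
Variable R : realType.

Definition ReCU (x : R) : R := (Num.max x 0) ^+ 3.
Definition ReLU (x : R) : R := Num.max x 0.

Fixpoint hidden_params (l0 : nat) (ls : seq nat) : Type :=
  match ls with
  | [::] => unit
  | l1 :: ls' => ('M[R]_(l1, l0) * 'cV[R]_l1 * hidden_params l1 ls')%type
  end.

Fixpoint hidden_eval (l0 : nat) (ls : seq nat) :
  hidden_params l0 ls -> 'cV[R]_l0 -> 'cV[R]_(last l0 ls) :=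
  match ls return hidden_params l0 ls -> 'cV[R]_l0 -> 'cV[R]_(last l0 ls) with
  | [::] => fun _ x => x
  | l1 :: ls' => fun p x => hidden_eval p.2 (map_mx ReCU (p.1.1 *m x + p.1.2))
  end.

(* A ReCU network R^d -> R with architecture (d, hs_1, ..., hs_{L-1}, 1):
   hidden layers with widths hs, then the affine output layer W_L x + B_L. *)
Record recu_net (d : nat) (hs : seq nat) := RecuNet {
  net_hidden : hidden_params d hs;
  net_WL : 'M[R]_(1, last d hs);
  net_BL : 'cV[R]_1 }.

(* realization x_0 |-> W_L x_{L-1} + B_L (points of R^d are row vectors) *)
Definition realize d hs (N : recu_net d hs) (x : 'rV[R]_d) : R :=
  (net_WL N *m hidden_eval (net_hidden N) x^T + net_BL N) 0 0.

Definition cube (d : nat) : set 'rV[R]_d :=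
  [set x | forall i, 0 <= x 0 i <= 1].

Definition eucl2 d (x : 'rV[R]_d) : R := \sum_(i < d) (x 0 i) ^+ 2.
Definition eucl d (x : 'rV[R]_d) : R := Num.sqrt (eucl2 x).

Definition evec d (i : 'I_d) : 'rV[R]_d := delta_mx 0 i.
Definition partial d (i : 'I_d) (f : 'rV[R]_d -> R) : 'rV[R]_d -> R :=
  fun x => derive f x (evec i).
Definition partial2 d (i j : 'I_d) (f : 'rV[R]_d -> R) : 'rV[R]_d -> R :=
  partial j (partial i f).

Definition hess d (f : 'rV[R]_d -> R) (x : 'rV[R]_d) : 'M[R]_d :=
  \matrix_(i, j) partial2 i j f x.

Definition psd d (A : 'M[R]_d) : Prop := forall v : 'rV[R]_d, 0 <= (v *m A *m v^T) 0 0.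
Definition loewner_le d (A B : 'M[R]_d) : Prop := psd (B - A).

(* C^{2,1}([0,1]^d) norm:
   max_{|g|<=2} sup_{[0,1]^d} |D^g f|  +  max_{|g|=2} Lip_{[0,1]^d}(D^g f) *)
Definition C2sup d (f : 'rV[R]_d -> R) : \bar R :=
  ereal_sup [set r%:E | r in [set r : R | exists x, cube x /\
      (r = `|f x| \/ (exists i, r = `|partial i f x|)
                  \/ (exists i j, r = `|partial2 i j f x|))]].
Definition C21lip d (f : 'rV[R]_d -> R) : \bar R :=
  ereal_sup [set r%:E | r in [set r : R | r = 0 \/ exists x y i j,
      [/\ cube x, cube y, x != y &
          r = `|partial2 i j f x - partial2 i j f y| / eucl (x - y)]]].
Definition C21norm d (f : 'rV[R]_d -> R) : \bar R := (C2sup f + C21lip f)%E.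

(* kappa-strong convexity on [0,1]^d (midpoint form, as in the paper) *)
Definition strongly_convex d (kappa : R) (phi : 'rV[R]_d -> R) : Prop :=
  forall u u', cube u -> cube u' ->
    phi (2^-1 *: (u + u')) <= (phi u + phi u') / 2 - kappa / 8 * eucl2 (u - u').

(* Lebesgue integral over [0,1]^n of a nonnegative function, as an iterated
   integral (Tonelli) with respect to the 1-d Lebesgue measure *)
Fixpoint cube_int (n : nat) : ('rV[R]_n -> \bar R) -> \bar R :=
  match n return ('rV[R]_n -> \bar R) -> \bar R with
  | 0 => fun f => f 0
  | n'.+1 => fun f =>
      (\int[@lebesgue_measure R]_(t in `[0%R, 1%R])
         cube_int (fun v : 'rV[R]_n' => f (row_mx (\row_(_ < 1) t) v)))%E
  end.

Definition Pkappa d (kappa : R) (phi : 'rV[R]_d -> R) : \bar R :=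
  cube_int (fun u : 'rV[R]_d => cube_int (fun u' : 'rV[R]_d =>
    (ReLU (phi (2^-1 *: (u + u')) - (phi u + phi u') / 2
           + kappa / 8 * eucl2 (u - u')))%:E)).

End Defs.

(* If phi is not (kappa - eta)-strongly convex, the second difference of phi
   along some segment of the cube is too small, so by Taylor's formula the
   Hessian quadratic form h(p, y) = y^T Hess phi(p) y is below
   (kappa - eta) |y|^2 at some point p.  Rescale y to a small length r and push
   p slightly towards the centre of the cube, to q.  Since the C^{2,1} norm
   bounds the second derivatives and their Lipschitz constants, h barely
   changes for nearby points and directions, so the midpoint defect integrated
   in P^(kappa) is at least eta r^2 / 4 for all pairs (x, x') in two boxes of
   side 2 delta around q -/+ y.  This value times the volumes of the two boxes
   is the bound zeta; it depends only on d, kappa, eta and the C^{2,1} bound. *)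

From HB Require Import structures.
From mathcomp Require Import all_boot all_order all_algebra.
From mathcomp Require Import all_classical all_reals all_analysis.
From mathcomp Require Import ring lra.
Set Implicit Arguments. Unset Strict Implicit. Unset Printing Implicit Defensive.
Import Order.TTheory GRing.Theory Num.Theory.
Import numFieldNormedType.Exports.
Local Open Scope ring_scope.
Local Open Scope classical_set_scope.

Section RealCalculus.
Variable R : realType.
Implicit Types (x h a c K s : R) (u : R -> R).

Lemma is_derive_of_quadratic_error u x a K :
  (forall h, `|h| <= 1 -> `|u (x + h) - u x - a * h| <= K * h ^+ 2) ->
  is_derive x 1 u a.
Proof.
move=> uK.
have K0 : 0 <= K.
  by have := uK 1; rewrite normr1 expr1n !mulr1 => /(_ (lexx _)); exact: le_trans (normr_ge0 _).
have dq : (fun h => h^-1 *: ((u \o shift x) (h *: 1) - u x)) @ 0^' --> a.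
  apply/cvgrPdist_le => e e0.
  have e1 : 0 < Num.min 1 (e / (K + 1)) by rewrite lt_min ltr01 divr_gt0 // ltr_wpDl.
  near=> h.
  have hn0 : h != 0 by near: h; exact: nbhs_dnbhs_neq.
  have : `|h| <= Num.min 1 (e / (K + 1)) by near: h; exact: dnbhs0_le.
  rewrite le_min => /andP[h1 he].
  rewrite /= /shift /= scaler1 [h + x]addrC.
  have -> : a - h^-1 * (u (x + h) - u x) = - h^-1 * (u (x + h) - u x - a * h) by field.
  rewrite normrM normrN normfV ler_pdivrMl ?normr_gt0 //.
  apply: (le_trans (uK h h1)).
  have -> : h ^+ 2 = `|h| ^+ 2 by rewrite real_normK ?num_real.
  have eK : e = e / (K + 1) * (K + 1) by rewrite divfK // gt_eqF // ltr_wpDl.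
  rewrite [X in _ <= _ * X]eK.
  move: he; set t := e / (K + 1) => he.
  have := mulr_ge0 K0 (normr_ge0 h).
  have := normr_ge0 h.
  nra.
split; first exact: cvgP dq.
exact: cvg_lim dq.
Unshelve. all: by end_near.
Qed.

Lemma max0_cases x : (0 <= x /\ Num.max x 0 = x) \/ (x < 0 /\ Num.max x 0 = 0).
Proof.
by case: (lerP 0 x) => hx; [left | right]; split=> //; rewrite ?max_l // max_r // ltW.
Qed.

Lemma is_derive_max0_sqr x :
  is_derive x 1 (fun t => Num.max t 0 ^+ 2) (2 * Num.max x 0).
Proof.
apply: (@is_derive_of_quadratic_error _ _ _ 3) => h.
rewrite !ler_norml => /andP[h1 h2].
by case: (max0_cases x) => -[hx ->]; case: (max0_cases (x + h)) => -[hxh ->];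
  apply/andP; split; nra.
Qed.

Lemma is_derive_ReCU x : is_derive x 1 (@ReCU R) (3 * Num.max x 0 ^+ 2).
Proof.
apply: (@is_derive_of_quadratic_error _ _ _ (3 * `|x| + 4)) => h.
rewrite /ReCU !ler_norml => /andP[h1 h2].
case: (max0_cases x) => -[hx ->].
  by rewrite ger0_norm //; case: (max0_cases (x + h)) => -[hxh ->]; apply/andP; split; nra.
by rewrite ltr0_norm //; case: (max0_cases (x + h)) => -[hxh ->]; apply/andP; split; nra.
Qed.

Lemma derivable_ReCU_derive x : derivable (fun t : R => 3 * Num.max t 0 ^+ 2) x 1.
Proof. by have := is_deriveZ 3 (is_derive_max0_sqr x). Qed.

Lemma is_derive_quadratic c s : is_derive s 1 (fun t => c * t ^+ 2) (2 * c * s).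
Proof.
apply: (@is_derive_of_quadratic_error _ _ _ `|c|) => h _.
have -> : c * (s + h) ^+ 2 - c * s ^+ 2 - 2 * c * s * h = c * h ^+ 2 by ring.
by rewrite normrM (ger0_norm (sqr_ge0 h)).
Qed.

Lemma is_derive_linear c s : is_derive s 1 (fun t => c * t) c.
Proof.
apply: (@is_derive_of_quadratic_error _ _ _ 0) => h _.
have -> : c * (s + h) - c * s - c * h = 0 by ring.
by rewrite normr0 mul0r.
Qed.

Lemma second_difference_ge (g g' g'' : R -> R) c :
  (forall s, is_derive s 1 g (g' s)) -> (forall s, is_derive s 1 g' (g'' s)) ->
  (forall s, -1 <= s <= 1 -> c <= g'' s) -> c <= g 1 + g (-1) - 2 * g 0.
Proof.
move=> dg dg' g''c.
(* h'' = g'' - c >= 0 on [-1, 1], so the second difference of h is nonnegative *)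
pose h t := g t - c / 2 * t ^+ 2.
pose h' t := g' t - c * t.
have dh s : is_derive s 1 h (h' s).
  have -> : h' s = g' s - 2 * (c / 2) * s by rewrite /h'; congr (_ - _); field.
  exact: is_deriveB (dg s) (is_derive_quadratic _ s).
have dh' s : is_derive s 1 h' (g'' s - c) by exact: is_deriveB (dg' s) (is_derive_linear c s).
have cont (f df : R -> R) a b : (forall s, is_derive s 1 f (df s)) ->
    {within `[a, b], continuous f}.
  by move=> df_f; apply: derivable_within_continuous => t _.
have h'_mono a b : -1 <= a -> a < b -> b <= 1 -> h' a <= h' b.
  move=> a1 ab b1.
  have [t tab E] := MVT ab (fun t _ => dh' t) (cont _ _ a b dh').
  rewrite -subr_ge0 E mulr_ge0 // ?subr_ge0 ?(ltW ab) //.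
  move: tab; rewrite in_itv /= => /andP[? ?].
  by apply: g''c; apply/andP; split; lra.
have [t1 + E1] := MVT ltr01 (fun t _ => dh t) (cont _ _ 0 1 dh).
have [t2 + E2] := MVT (ltrN10 R) (fun t _ => dh t) (cont _ _ (-1) 0 dh).
rewrite !in_itv /= => /andP[t2l t2r] /andP[t1l t1r].
have : h' t2 <= h' t1 by apply: h'_mono; lra.
by move: E1 E2; rewrite /h /=; lra.
Qed.

End RealCalculus.

Section TwiceDifferentiable.
Variables (R : realType) (d : nat).
Implicit Types (f g : 'rV[R]_d -> R) (x : 'rV[R]_d).

Definition twice_differentiable f :=
  (forall x, differentiable f x) /\ (forall i x, differentiable (partial i f) x).

Lemma twice_differentiable_cst (c : R) : twice_differentiable (fun=> c).
Proof.
split=> [x|i x]; first exact: differentiable_cst.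
have -> : partial i (fun=> c) = cst 0 by apply: funext => y; rewrite /partial derive_cst.
exact: differentiable_cst.
Qed.

Lemma partial_coord i j : partial i (fun x => x 0 j) = fun=> evec R i 0 j.
Proof.
apply: funext => x; rewrite /partial.
have := @derive_mx R _ 1 d id x (evec R i) (@derivable_id _ _ _ _).
by rewrite derive_id => /matrixP /(_ 0 j); rewrite [RHS]mxE.
Qed.

Lemma twice_differentiable_coord j : twice_differentiable (fun x => x 0 j).
Proof.
split=> [x|i x]; first exact: differentiable_coord.
by rewrite partial_coord; exact: differentiable_cst.
Qed.

Lemma twice_differentiableD f g : twice_differentiable f -> twice_differentiable g ->
  twice_differentiable (fun x => f x + g x).
Proof.
move=> [df ddf] [dg ddg]; split=> [x|i x]; first exact: differentiableD.
have -> : partial i (fun x => f x + g x) = partial i f + partial i g.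
  by apply: funext => y; rewrite /partial (deriveD (diff_derivable (df y)) (diff_derivable (dg y))).
exact: differentiableD.
Qed.

Lemma twice_differentiableZ (c : R) f : twice_differentiable f ->
  twice_differentiable (fun x => c * f x).
Proof.
move=> [df ddf]; split=> [x|i x]; first exact: differentiableZ.
have -> : partial i (fun x => c * f x) = c *: partial i f.
  by apply: funext => y; rewrite /partial (deriveZ c (diff_derivable (df y))).
exact: differentiableZ.
Qed.

Lemma twice_differentiable_sum n (F : 'I_n -> 'rV[R]_d -> R) :
  (forall k, twice_differentiable (F k)) ->
  twice_differentiable (fun x => \sum_(k < n) F k x).
Proof.
elim: n F => [|n IH] F dF.
  by under eq_fun do rewrite big_ord0; exact: twice_differentiable_cst.
under eq_fun do rewrite big_ord_recr /=.
by apply: twice_differentiableD; [apply: IH => k|].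
Qed.

Lemma twice_differentiable_comp (u u' : R -> R) f :
  (forall t : R, is_derive t 1 u (u' t)) -> (forall t : R, derivable u' t 1) ->
  twice_differentiable f -> twice_differentiable (fun x => u (f x)).
Proof.
move=> du du' [df ddf].
have diff_u t : differentiable u t by apply/derivable1_diffP.
have diff_u' t : differentiable u' t by apply/derivable1_diffP; exact: du'.
have diff_uf x : differentiable (u \o f) x by exact: differentiable_comp.
split=> [|i x]; first exact: diff_uf.
have -> : partial i (fun x => u (f x)) = partial i f * (u' \o f).
  apply: funext => y; rewrite /partial.
  rewrite (deriveE _ (diff_uf y)) (diff_comp (df y) (diff_u (f y))) /=.
  rewrite diff1E // derive1E derive_val.
  by rewrite -(deriveE _ (df y)).
by apply: differentiableM; [exact: ddf | exact: differentiable_comp].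
Qed.

Lemma twice_differentiable_ReCU f :
  twice_differentiable f -> twice_differentiable (fun x => ReCU (f x)).
Proof.
apply: (@twice_differentiable_comp _ (fun t => 3 * Num.max t 0 ^+ 2)).
  exact: is_derive_ReCU.
exact: derivable_ReCU_derive.
Qed.

Lemma twice_differentiable_hidden_eval (ls : seq nat) l0 (p : hidden_params R l0 ls)
    (g : 'I_l0 -> 'rV[R]_d -> R) :
  (forall j, twice_differentiable (g j)) ->
  forall k, twice_differentiable (fun x => hidden_eval p (\col_j g j x) k 0).
Proof.
elim: ls l0 p g => [|l1 ls IH] l0 p g dg k /=.
  by under eq_fun do rewrite mxE; exact: dg.
pose g' (k : 'I_l1) x := ReCU (\sum_j p.1.1 k j * g j x + p.1.2 k 0).
have -> : (fun x => hidden_eval p.2 (map_mx (@ReCU R) (p.1.1 *m \col_j g j x + p.1.2)) k 0)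
    = (fun x => hidden_eval p.2 (\col_j g' j x) k 0).
  apply: funext => x; congr (hidden_eval _ _ _ _); apply/matrixP => a b.
  rewrite !mxE (ord1 b) /g'; congr (ReCU (_ + _)).
  by apply: eq_bigr => j _; rewrite mxE.
apply: IH => j; apply/twice_differentiable_ReCU/twice_differentiableD.
  by apply: twice_differentiable_sum => j'; exact: twice_differentiableZ.
exact: twice_differentiable_cst.
Qed.

Lemma twice_differentiable_realize hs (N : recu_net R d hs) :
  twice_differentiable (realize N).
Proof.
have -> : realize N = fun x => \sum_k net_WL N 0 k *
    hidden_eval (net_hidden N) (\col_j x 0 j) k 0 + net_BL N 0 0.
  apply: funext => x; rewrite /realize.
  have -> : x^T = \col_j x 0 j by apply/matrixP => a b; rewrite !mxE (ord1 b).
  by rewrite !mxE; congr (_ + _); apply: eq_bigr => k _; rewrite !mxE.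
apply: twice_differentiableD; last exact: twice_differentiable_cst.
apply: twice_differentiable_sum => k; apply: twice_differentiableZ.
exact: twice_differentiable_hidden_eval twice_differentiable_coord k.
Qed.

End TwiceDifferentiable.

Section Euclidean.
Variables (R : realType) (d : nat).
Implicit Types (x y : 'rV[R]_d) (c s : R).

Lemma ler_sum_const n (F : 'I_n -> R) c :
  (forall i, F i <= c) -> \sum_(i < n) F i <= n%:R * c.
Proof.
move=> Fc; apply: le_trans (ler_sum _ (fun i _ => Fc i)) _.
by rewrite sumr_const card_ord mulr_natl.
Qed.

Lemma ler_norm_sum_const n (F : 'I_n -> R) c :
  (forall i, `|F i| <= c) -> `|\sum_(i < n) F i| <= n%:R * c.
Proof. by move=> Fc; apply: le_trans (ler_norm_sum _ _ _) (ler_sum_const Fc). Qed.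

Lemma eucl2_ge0 x : 0 <= eucl2 x.
Proof. by apply: sumr_ge0 => i _; exact: sqr_ge0. Qed.

Lemma sqr_coord_le_eucl2 x i : x 0 i ^+ 2 <= eucl2 x.
Proof.
rewrite /eucl2 (bigD1 i) //= lerDl.
by apply: sumr_ge0 => j _; exact: sqr_ge0.
Qed.

Lemma normr_coord_le_eucl x i : `|x 0 i| <= eucl x.
Proof.
by rewrite -sqrtr_sqr ler_sqrt ?eucl2_ge0 // (sqr_coord_le_eucl2 x i).
Qed.

Lemma normr_coord_le_of_eucl2 x r i : 0 <= r -> eucl2 x = r ^+ 2 -> `|x 0 i| <= r.
Proof.
by move=> r0 xr; apply: le_trans (normr_coord_le_eucl x i) _; rewrite /eucl xr sqrtr_sqr ger0_norm.
Qed.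

Lemma eucl2_gt0 x : x != 0 -> 0 < eucl2 x.
Proof.
apply: contraNT; rewrite -leNgt => x0; apply/eqP/matrixP => a i.
rewrite (ord1 a) mxE; apply/eqP; rewrite -sqrf_eq0 eq_le sqr_ge0 andbT.
exact: le_trans (sqr_coord_le_eucl2 x i) x0.
Qed.

Lemma eucl2Z c x : eucl2 (c *: x) = c ^+ 2 * eucl2 x.
Proof. by rewrite /eucl2 mulr_sumr; apply: eq_bigr => i _; rewrite !mxE exprMn. Qed.

Lemma eucl2_sub_half x y : eucl2 (x - y) = 4 * eucl2 (2^-1 *: (y - x)).
Proof. by rewrite /eucl2 mulr_sumr; apply: eq_bigr => i _; rewrite !mxE; field. Qed.

Lemma eucl_le_coord_bound x s : (forall i, `|x 0 i| <= s) -> eucl x <= d%:R * s.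
Proof.
move=> xs; have [d0|d_gt0] := posnP d.
  rewrite /eucl /eucl2 big1 ?sqrtr0 ?d0 ?mul0r // => i.
  by move: (ltn_ord i); rewrite {2}d0.
have s0 : 0 <= s := le_trans (normr_ge0 _) (xs (Ordinal d_gt0)).
have ds0 : 0 <= d%:R * s by rewrite mulr_ge0.
rewrite -(ger0_norm ds0) -sqrtr_sqr ler_sqrt ?sqr_ge0 //.
apply: le_trans (_ : d%:R * s ^+ 2 <= _).
  apply: ler_sum_const => i.
  by rewrite -real_normK ?num_real // !expr2; apply: ler_pM.
rewrite exprMn ler_wpM2r ?sqr_ge0 // expr2 ler_peMr ?ler0n //.
by rewrite ler1n.
Qed.

Lemma eucl2_sub_le x y A eps :
  (forall i, `|x 0 i| <= A) -> (forall i, `|y 0 i| <= A) ->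
  (forall i, `|x 0 i - y 0 i| <= eps) ->
  `|eucl2 x - eucl2 y| <= d%:R * (2 * A * eps).
Proof.
move=> xA yA xy; rewrite /eucl2 -sumrB; apply: ler_norm_sum_const => i.
have -> : x 0 i ^+ 2 - y 0 i ^+ 2 = (x 0 i - y 0 i) * (x 0 i + y 0 i) by ring.
rewrite normrM mulrC; apply: ler_pM; rewrite ?normr_ge0 //.
by apply: le_trans (ler_normD _ _) _; rewrite mulr2n mulrDl mul1r lerD.
Qed.

End Euclidean.

Section C21Norm.
Variables (R : realType) (d : nat) (f : 'rV[R]_d -> R) (H : R).
Hypothesis fH : (C21norm f <= H%:E)%E.

Let C2sup_ge0 : (0 <= C2sup f)%E.
Proof.
apply: le_trans (_ : `|f 0|%:E <= _)%E; first by rewrite lee_fin.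
apply: ereal_sup_ubound; exists `|f 0| => //; exists 0; split; last by left.
by move=> i; rewrite mxE lexx ler01.
Qed.

Let C21lip_ge0 : (0 <= C21lip f)%E.
Proof. by apply: ereal_sup_ubound; exists 0 => //; left. Qed.

Lemma C21norm_bound_ge0 : 0 <= H.
Proof. by rewrite -lee_fin; apply: le_trans fH; exact: adde_ge0. Qed.

Lemma C21norm_partial2_le x i j : cube x -> `|partial2 i j f x| <= H.
Proof.
move=> cx; rewrite -lee_fin; apply: le_trans (le_trans (leeDl _ C21lip_ge0) fH).
apply: ereal_sup_ubound; exists `|partial2 i j f x| => //.
by exists x; split => //; right; right; exists i, j.
Qed.

Lemma C21norm_partial2_lipschitz x y i j : cube x -> cube y ->
  `|partial2 i j f x - partial2 i j f y| <= H * eucl (x - y).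
Proof.
move=> cx cy; have [->|xy] := eqVneq x y.
  rewrite subrr normr0 /eucl /eucl2 big1 ?sqrtr0 ?mulr0 // => k _.
  by rewrite !mxE subrr expr0n.
have e0 : 0 < eucl (x - y) by rewrite sqrtr_gt0 eucl2_gt0 // subr_eq0.
rewrite -ler_pdivrMr // -lee_fin; apply: le_trans (le_trans (leeDr _ C2sup_ge0) fH).
apply: ereal_sup_ubound; exists (`|partial2 i j f x - partial2 i j f y| / eucl (x - y)) => //.
by right; exists x, y, i, j; split.
Qed.

End C21Norm.

Section HessianForm.
Variables (R : realType) (d : nat).
Implicit Types (f : 'rV[R]_d -> R) (x y z a b : 'rV[R]_d) (c s t h : R).

Definition hess_form f z a : R := (a *m hess f z *m a^T) 0 0.

Lemma hess_formE f z a :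
  hess_form f z a = \sum_i a 0 i * \sum_j a 0 j * partial2 i j f z.
Proof.
rewrite /hess_form mxE; under eq_bigr do rewrite !mxE big_distrl /=.
rewrite exchange_big /=; apply: eq_bigr => i _; rewrite big_distrr /=.
by apply: eq_bigr => j _; rewrite !mxE; ring.
Qed.

Lemma hess_formZ f z a c : hess_form f z (c *: a) = c ^+ 2 * hess_form f z a.
Proof. by rewrite /hess_form linearZ /= -scalemxAr -!scalemxAl !mxE expr2 mulrA. Qed.

Lemma is_derive_line f z y s : (forall x, differentiable f x) ->
  is_derive s 1 (fun t => f (z + t *: y)) (\sum_i y 0 i * partial i f (z + s *: y)).
Proof.
move=> df; set w := z + s *: y.
have E : (fun h : R => h^-1 *: (((fun t => f (z + t *: y)) \o shift s) (h *: 1)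
            - f (z + s *: y)))
       = (fun h : R => h^-1 *: ((f \o shift w) (h *: y) - f w)).
  by apply: funext => h; rewrite /= /shift /w [h *: 1]mulr1 scalerDl addrCA.
have dfl : derivable (fun t => f (z + t *: y)) s 1.
  by rewrite /derivable E; exact: diff_derivable.
split=> //; rewrite /derive E -/(derive f w y) (deriveE _ (df w)).
rewrite {1}(row_sum_delta y) raddf_sum; apply: eq_bigr => i _.
apply: eq_trans (linearZ_LR ('d f w) (y 0 i) (delta_mx 0 i)) _.
by rewrite /partial (deriveE _ (df w)).
Qed.

Lemma is_derive_line_slope f z y s : twice_differentiable f ->
  is_derive s 1 (fun t => \sum_i y 0 i * partial i f (z + t *: y))
    (hess_form f (z + s *: y) y).
Proof.
move=> [_ ddf]; rewrite hess_formE -(fct_sumE _ _ (fun i t => y 0 i * partial i f (z + t *: y))).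
apply: is_derive_sum => i; exact: is_deriveZ (is_derive_line _ _ _ (ddf i)).
Qed.

Lemma second_difference_hess_form_ge f z y c : twice_differentiable f ->
  (forall s, -1 <= s <= 1 -> c <= hess_form f (z + s *: y) y) ->
  c <= f (z + y) + f (z - y) - 2 * f z.
Proof.
move=> [df ddf] hc.
have := second_difference_ge (is_derive_line z y ^~ df)
  (fun s => is_derive_line_slope z y s (conj df ddf)) hc.
by rewrite scale1r scaleN1r scale0r addr0.
Qed.

Lemma second_difference_hess_form_le f z y c : twice_differentiable f ->
  (forall s, -1 <= s <= 1 -> hess_form f (z + s *: y) y <= c) ->
  f (z + y) + f (z - y) - 2 * f z <= c.
Proof.
move=> [df ddf] hc.
have := @second_difference_ge R (fun t => - f (z + t *: y))
  (fun t => - \sum_i y 0 i * partial i f (z + t *: y))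
  (fun t => - hess_form f (z + t *: y) y) (- c).
rewrite scale1r scaleN1r scale0r addr0.
have Nle (a b : R) : - c <= a -> b = - a -> b <= c by move=> ? ->; lra.
move=> sd; apply: (Nle _ _ (sd _ _ _)); last by ring.
- by move=> s; apply/is_deriveN/is_derive_line.
- by move=> s; apply/is_deriveN/is_derive_line_slope.
- by move=> s /hc; rewrite lerN2.
Qed.

Lemma hess_form_sub_le f z (z' : 'rV[R]_d) a b (A eps H L : R) :
  (forall i, `|a 0 i| <= A) -> (forall i, `|b 0 i| <= A) ->
  (forall i, `|a 0 i - b 0 i| <= eps) ->
  (forall i j, `|partial2 i j f z'| <= H) ->
  (forall i j, `|partial2 i j f z - partial2 i j f z'| <= L) ->
  `|hess_form f z a - hess_form f z' b| <= d%:R ^+ 2 * (A ^+ 2 * L + 2 * A * eps * H).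
Proof.
move=> aA bA ab fH fL.
rewrite !hess_formE -sumrB expr2 -mulrA; apply: ler_norm_sum_const => i.
rewrite !big_distrr -sumrB; apply: ler_norm_sum_const => j /=.
move: (partial2 i j f z) (partial2 i j f z') (fH i j) (fL i j) => P P' P'H PL.
have A0 : 0 <= A := le_trans (normr_ge0 _) (aA i).
have aa : `|a 0 i| * `|a 0 j| <= A ^+ 2 by rewrite expr2; apply: ler_pM.
have ab2 : `|a 0 i * a 0 j - b 0 i * b 0 j| <= 2 * A * eps.
  have -> : a 0 i * a 0 j - b 0 i * b 0 j
    = a 0 i * (a 0 j - b 0 j) + (a 0 i - b 0 i) * b 0 j by ring.
  apply: le_trans (ler_normD _ _) _; rewrite !normrM mulr2n !mulrDl mul1r.
  by apply: lerD; [|rewrite [A * eps]mulrC]; apply: ler_pM.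
have -> : a 0 i * (a 0 j * P) - b 0 i * (b 0 j * P')
  = (a 0 i * a 0 j) * (P - P') + (a 0 i * a 0 j - b 0 i * b 0 j) * P' by ring.
apply: le_trans (ler_normD _ _) _; rewrite !normrM.
by apply: lerD; apply: ler_pM; rewrite ?mulr_ge0.
Qed.

End HessianForm.

Section CubeIntegral.
Variable R : realType.
Implicit Types (a b c del t : R).

Lemma integral_itv01_ge (f : R -> \bar R) a b c :
  0 <= a -> a < b -> b <= 1 -> 0 <= c -> (forall t, (0 <= f t)%E) ->
  (forall t, a <= t <= b -> (c%:E <= f t)%E) ->
  ((c * (b - a))%:E <= \int[@lebesgue_measure R]_(t in `[0%R, 1%R]) f t)%E.
Proof.
move=> a0 ab b1 c0 f0 fc.
have -> : (c * (b - a))%:E = (\int[@lebesgue_measure R]_(t in `[a, b]) (cst c%:E) t)%E.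
  rewrite integral_cst /=; last exact: measurable_itv.
  by rewrite lebesgue_measure_itv /= lte_fin ab -EFinD EFinM.
rewrite ge0_integralE; last by move=> x _ /=; rewrite lee_fin.
rewrite ge0_integralE; last by move=> x _; exact: f0.
apply: ereal_sup_le => _ [h hh <-]; exists h => //= x.
apply: le_trans (hh x) _; rewrite /patch.
case: ifPn => [|_]; last by case: ifPn.
rewrite inE /= in_itv /= => /andP[ax xb].
by rewrite ifT ?fc ?ax // inE /= in_itv /= (le_trans a0 ax) (le_trans xb b1).
Qed.

Lemma cube_int_ge0 n (F : 'rV[R]_n -> \bar R) :
  (forall x, (0 <= F x)%E) -> (0 <= cube_int F)%E.
Proof.
elim: n F => [|n IH] F F0 /=; first exact: F0.
by apply: integral_ge0 => t _; apply: IH => v; exact: F0.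
Qed.

Lemma row_mx_cons0 n t (v : 'rV[R]_n) : row_mx (\row_(_ < 1) t) v 0 ord0 = t.
Proof.
have -> : ord0 = lshift n (0 : 'I_1) by apply: val_inj.
by rewrite row_mxEl mxE.
Qed.

Lemma row_mx_consS n t (v : 'rV[R]_n) j : row_mx (\row_(_ < 1) t) v 0 (lift ord0 j) = v 0 j.
Proof.
have -> : lift ord0 j = rshift 1 j by apply: val_inj.
by rewrite row_mxEr.
Qed.

Lemma cube_int_ge_box n (F : 'rV[R]_n -> \bar R) (p : 'rV[R]_n) del c :
  0 < del -> 0 <= c -> (forall i, del <= p 0 i <= 1 - del) ->
  (forall x, (0 <= F x)%E) ->
  (forall x : 'rV[R]_n, (forall i, `|x 0 i - p 0 i| <= del) -> (c%:E <= F x)%E) ->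
  ((c * (2 * del) ^+ n)%:E <= cube_int F)%E.
Proof.
elim: n F p c => [|n IH] F p c del0 c0 pdel F0 Fc /=.
  by rewrite expr0 mulr1; apply: Fc => -[].
have /andP[p0l p0r] := pdel ord0.
have -> : c * (2 * del) ^+ n.+1
    = c * (2 * del) ^+ n * ((p 0 ord0 + del) - (p 0 ord0 - del)) by rewrite exprSr; ring.
have cdel0 : 0 <= c * (2 * del) ^+ n by rewrite mulr_ge0 // exprn_ge0 // mulr_ge0 // ltW.
apply: integral_itv01_ge => //; try lra.
  by move=> t; apply: cube_int_ge0.
move=> t tp; apply: (IH _ (\row_j p 0 (lift ord0 j))) => // [j|v vp].
  by rewrite mxE; exact: pdel.
apply: Fc => i; have [j ->|->] := unliftP ord0 i.
  by rewrite row_mx_consS; have := vp j; rewrite mxE.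
by rewrite row_mx_cons0 ler_norml; lra.
Qed.

End CubeIntegral.

Section MidpointDefect.
Variables (R : realType) (d : nat).
Implicit Types (f : 'rV[R]_d -> R) (p q u v x y : 'rV[R]_d) (k c del r s : R).

Definition midpoint_defect k f u v :=
  f (2^-1 *: (u + v)) - (f u + f v) / 2 + k / 8 * eucl2 (u - v).

Lemma midpoint_defectE k f u v : midpoint_defect k f u v =
  k / 2 * eucl2 (2^-1 *: (v - u)) - (f v + f u - 2 * f (2^-1 *: (u + v))) / 2.
Proof. by rewrite /midpoint_defect eucl2_sub_half; field. Qed.

Lemma midpoint_addE u v : 2^-1 *: (u + v) + 2^-1 *: (v - u) = v.
Proof. by apply/matrixP => a b; rewrite !mxE; field. Qed.

Lemma midpoint_subE u v : 2^-1 *: (u + v) - 2^-1 *: (v - u) = u.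
Proof. by apply/matrixP => a b; rewrite !mxE; field. Qed.

Lemma cube_segment u v s : cube u -> cube v -> -1 <= s <= 1 ->
  cube (2^-1 *: (u + v) + s *: (2^-1 *: (v - u))).
Proof.
move=> cu cv /andP[s1 s2] i; rewrite !mxE.
by move: (cu i) (cv i) => /andP[? ?] /andP[? ?]; apply/andP; split; nra.
Qed.

Lemma not_strongly_convex_defect k f : ~ strongly_convex k f ->
  exists u v, [/\ cube u, cube v & 0 < midpoint_defect k f u v].
Proof.
move=> nsc; apply: contrapT => nd; apply: nsc => u v cu cv.
rewrite leNgt; apply/negP => lt.
by apply: nd; exists u, v; split => //; rewrite /midpoint_defect; lra.
Qed.

Lemma not_strongly_convex_hess_form k f : twice_differentiable f ->
  ~ strongly_convex k f -> exists p y, cube p /\ hess_form f p y < k * eucl2 y.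
Proof.
move=> f2 /not_strongly_convex_defect [u [v [cu cv]]].
rewrite midpoint_defectE.
have := midpoint_addE u v; have := midpoint_subE u v.
set m := 2^-1 *: (u + v); set y := 2^-1 *: (v - u) => uE vE.
rewrite -(congr1 f uE) -(congr1 f vE) => defect_pos.
have : f (m + y) + f (m - y) - 2 * f m < k * eucl2 y by lra.
apply: contraPP => /forallNP hk; apply/negP; rewrite -leNgt.
apply: second_difference_hess_form_ge => // s s1; rewrite leNgt; apply/negP => lt.
by apply: (hk (m + s *: y)); exists y; split => //; exact: cube_segment.
Qed.

Lemma hess_form_lt_normalize k f p y r : 0 < r -> hess_form f p y < k * eucl2 y ->
  exists2 y', eucl2 y' = r ^+ 2 & hess_form f p y' < k * r ^+ 2.
Proof.
move=> r0 hy.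
have y0 : y != 0.
  by apply: contraTneq hy => ->; rewrite -(scale0r 0) hess_formZ eucl2Z expr0n /= !mul0r mulr0 ltxx.
have e0 := eucl2_gt0 y0.
have re0 : 0 < r / Num.sqrt (eucl2 y) by rewrite divr_gt0 // sqrtr_gt0.
have er : eucl2 ((r / Num.sqrt (eucl2 y)) *: y) = r ^+ 2.
  by rewrite eucl2Z expr_div_n sqr_sqrtr ?ltW // divfK // gt_eqF.
exists ((r / Num.sqrt (eucl2 y)) *: y) => //.
by rewrite -er eucl2Z hess_formZ mulrCA ltr_pM2l // exprn_gt0.
Qed.

Lemma cube_shift_interior p r : cube p -> 0 < r -> 4 * r <= 1 ->
  exists q, (forall i, 2 * r <= q 0 i <= 1 - 2 * r) /\ (forall i, `|q 0 i - p 0 i| <= 2 * r).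
Proof.
move=> cp r0 r1; exists (p + (4 * r) *: (const_mx 2^-1 - p)).
split=> i; rewrite !mxE; move: (cp i) => /andP[? ?].
  by apply/andP; split; nra.
by rewrite ler_norml; apply/andP; split; nra.
Qed.

Lemma Pkappa_ge_box k f (b1 b2 : 'rV[R]_d) del c :
  0 < del -> 0 <= c ->
  (forall i, del <= b1 0 i <= 1 - del) -> (forall i, del <= b2 0 i <= 1 - del) ->
  (forall x y, (forall i, `|x 0 i - b1 0 i| <= del) -> (forall i, `|y 0 i - b2 0 i| <= del) ->
     c <= midpoint_defect k f x y) ->
  ((c * (2 * del) ^+ d * (2 * del) ^+ d)%:E <= Pkappa k f)%E.
Proof.
move=> del0 c0 b1del b2del box.
have ReLU_ge0 t : (0 <= (ReLU t)%:E)%E by rewrite lee_fin le_max lexx orbT.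
have cdel0 : 0 <= c * (2 * del) ^+ d by rewrite mulr_ge0 // exprn_ge0 // mulr_ge0 // ltW.
apply: (cube_int_ge_box del0 cdel0 b1del) => [x|x xb1]; first exact: cube_int_ge0.
apply: (cube_int_ge_box del0 c0 b2del) => // y yb2.
by rewrite lee_fin le_max (box _ _ xb1 yb2).
Qed.

End MidpointDefect.

Section DefectLowerBound.
Variables (R : realType) (d : nat) (f : 'rV[R]_d -> R) (H : R).
Hypothesis f2 : twice_differentiable f.
Hypothesis H0 : 0 <= H.
Hypothesis fH : forall z i j, cube z -> `|partial2 i j f z| <= H.
Hypothesis fL : forall z z' i j, cube z -> cube z' ->
  `|partial2 i j f z - partial2 i j f z'| <= H * eucl (z - z').
Implicit Types (p q x y : 'rV[R]_d) (k eta r del : R).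

(* The bound of hess_form_sub_le for directions within [del] of a vector of
   length [r], at points within [3 r + 2 del] of the base point. *)
Definition hess_error r del : R :=
  d%:R ^+ 2 * ((r + del) ^+ 2 * (H * (d%:R * (3 * r + 2 * del))) + 2 * (r + del) * del * H).

Lemma defect_error_le k eta r del : 0 <= k -> 0 <= del <= r ->
  80 * (d%:R ^+ 3 * H) * r <= eta -> 16 * (k * d%:R + d%:R ^+ 2 * H) * del <= eta * r ->
  hess_error r del / 2 + k * d%:R * ((r + del) * del) <= eta * r ^+ 2 / 4.
Proof.
move=> k0 /andP[del0 delr] hr hdel; rewrite /hess_error.
have D0 : 0 <= d%:R :> R := ler0n _ _.
set D : R := d%:R in D0 hr hdel *.
have r0 : 0 <= r := le_trans del0 delr.
have A2r : r + del <= 2 * r by lra.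
have cubic : D ^+ 2 * ((r + del) ^+ 2 * (H * (D * (3 * r + 2 * del)))) / 2
    <= 10 * (D ^+ 3 * H) * r ^+ 3.
  have -> : D ^+ 2 * ((r + del) ^+ 2 * (H * (D * (3 * r + 2 * del)))) / 2
      = D ^+ 3 * H * ((r + del) ^+ 2 * (3 * r + 2 * del)) / 2 by ring.
  have A3 : (r + del) ^+ 2 * (3 * r + 2 * del) <= 20 * r ^+ 3.
    have -> : 20 * r ^+ 3 = (2 * r) ^+ 2 * (5 * r) by ring.
    by apply: ler_pM; rewrite ?sqr_ge0 ?lerXn2r ?nnegrE //; lra.
  have : 0 <= D ^+ 3 * H by rewrite mulr_ge0 ?exprn_ge0.
  nra.
have linear : D ^+ 2 * (2 * (r + del) * del * H) / 2 + k * D * ((r + del) * del)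
    <= 2 * r * del * (k * D + D ^+ 2 * H).
  have -> : D ^+ 2 * (2 * (r + del) * del * H) / 2 + k * D * ((r + del) * del)
      = (r + del) * (del * (k * D + D ^+ 2 * H)) by field.
  rewrite -mulrA; apply: ler_wpM2r => //.
  by rewrite mulr_ge0 // addr_ge0 ?mulr_ge0 ?exprn_ge0.
have : 0 <= D ^+ 3 * H by rewrite mulr_ge0 ?exprn_ge0.
rewrite mulrDr mulrDl; nra.
Qed.

Lemma midpoint_defect_ge_near k eta p q y r del x x' :
  0 <= k -> 0 <= del <= r ->
  hess_error r del / 2 + k * d%:R * ((r + del) * del) <= eta * r ^+ 2 / 4 ->
  cube p -> eucl2 y = r ^+ 2 -> hess_form f p y < (k - eta) * r ^+ 2 ->
  (forall i, `|q 0 i - p 0 i| <= 2 * r) -> cube x -> cube x' ->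
  (forall i, `|x 0 i - (q 0 i - y 0 i)| <= del) -> (forall i, `|x' 0 i - (q 0 i + y 0 i)| <= del) ->
  eta * r ^+ 2 / 4 <= midpoint_defect k f x x'.
Proof.
move=> k0 /andP[del0 delr] budget cp ey hy qp cx cx' xq x'q.
rewrite midpoint_defectE.
have := midpoint_addE x x'; have := midpoint_subE x x'.
set m := 2^-1 *: (x + x'); set z := 2^-1 *: (x' - x) => xE x'E.
rewrite -(congr1 f xE) -(congr1 f x'E).
have yr i : `|y 0 i| <= r by apply: normr_coord_le_of_eucl2 => //; lra.
have zy i : `|z 0 i - y 0 i| <= del.
  move: (xq i) (x'q i); rewrite !mxE !ler_norml => /andP[? ?] /andP[? ?].
  by apply/andP; split; lra.
have zA i : `|z 0 i| <= r + del.
  by move: (zy i) (yr i); rewrite !ler_norml => /andP[? ?] /andP[? ?]; apply/andP; split; lra.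
have yA i : `|y 0 i| <= r + del by apply: le_trans (yr i) _; lra.
have hess_near s : -1 <= s <= 1 ->
    hess_form f (m + s *: z) z <= hess_form f p y + hess_error r del.
  move=> s1; have czs : cube (m + s *: z) by exact: cube_segment.
  have zsp i : `|(m + s *: z - p) 0 i| <= 3 * r + 2 * del.
    have szA : `|s * z 0 i| <= r + del.
      by rewrite normrM; apply: (le_trans (ler_piMl _ _) (zA i)); rewrite ?normr_ge0 ?ler_norml.
    move: (xq i) (x'q i) (qp i) szA; rewrite !mxE !ler_norml.
    by move=> /andP[? ?] /andP[? ?] /andP[? ?] /andP[? ?]; apply/andP; split; lra.
  have := hess_form_sub_le zA yA zy (fun i j => fH i j cp) (fun i j =>
    le_trans (fL i j czs cp) (ler_wpM2l H0 (eucl_le_coord_bound zsp))).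
  by rewrite /hess_error ler_norml => /andP[_ ?]; lra.
have sd := second_difference_hess_form_le f2 hess_near.
have := eucl2_sub_le zA yA zy; rewrite ey ler_norml => /andP[ez _].
have kz : k * (r ^+ 2 - d%:R * (2 * (r + del) * del)) <= k * eucl2 z.
  by apply: ler_wpM2l => //; lra.
lra.
Qed.

(* The radius makes the cubic part 10 d^3 H r^3 of the error at most
   eta r^2 / 8, and the margin does the same for the part linear in it. *)
Definition defect_radius eta : R := eta / (80 * (d%:R ^+ 3 * H + 1)).

Definition defect_margin k eta : R :=
  defect_radius eta * (eta / (16 * (k * d%:R + d%:R ^+ 2 * H + 1))).

Definition defect_floor k eta : R :=
  eta * defect_radius eta ^+ 2 / 4
    * (2 * defect_margin k eta) ^+ d * (2 * defect_margin k eta) ^+ d.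

Lemma defect_constants k eta : 0 <= k -> 0 < eta <= 1 ->
  let r := defect_radius eta in let del := defect_margin k eta in
  [/\ 0 < r, 4 * r <= 1, 0 < del <= r,
      80 * (d%:R ^+ 3 * H) * r <= eta & 16 * (k * d%:R + d%:R ^+ 2 * H) * del <= eta * r].
Proof.
move=> k0 /andP[eta0 eta1] r del.
have P0 : 0 <= d%:R ^+ 3 * H :> R by rewrite mulr_ge0 ?exprn_ge0.
have S0 : 0 <= k * d%:R + d%:R ^+ 2 * H :> R by rewrite addr_ge0 ?mulr_ge0 ?exprn_ge0.
have rE : r * (80 * (d%:R ^+ 3 * H + 1)) = eta.
  by rewrite /r /defect_radius divfK // gt_eqF // mulr_gt0 // ltr_wpDl.
set th := eta / (16 * (k * d%:R + d%:R ^+ 2 * H + 1)).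
have thE : th * (16 * (k * d%:R + d%:R ^+ 2 * H + 1)) = eta.
  by rewrite divfK // gt_eqF // mulr_gt0 // ltr_wpDl.
have r0 : 0 < r by rewrite divr_gt0 // mulr_gt0 // ltr_wpDl.
have th0 : 0 < th by rewrite divr_gt0 // mulr_gt0 // ltr_wpDl.
have delE : del = r * th by [].
split=> //.
- nra.
- rewrite delE; apply/andP; split; nra.
- nra.
- nra.
Qed.

Lemma defect_floor_gt0 k eta : 0 <= k -> 0 < eta <= 1 -> 0 < defect_floor k eta.
Proof.
move=> k0 eta01; have [r0 _ /andP[del0 _] _ _] := defect_constants k0 eta01.
have [eta0 _] := andP eta01.
have del2 : 0 < 2 * defect_margin k eta by rewrite mulr_gt0.
have floor0 : 0 < eta * defect_radius eta ^+ 2 / 4 by rewrite divr_gt0 // mulr_gt0 // exprn_gt0.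
by rewrite /defect_floor mulr_gt0 ?exprn_gt0 // mulr_gt0 ?exprn_gt0.
Qed.

Lemma Pkappa_ge_defect_floor k eta : 0 <= k -> 0 < eta <= 1 ->
  ~ strongly_convex (k - eta) f -> ((defect_floor k eta)%:E <= Pkappa k f)%E.
Proof.
move=> k0 eta01 nsc; have [eta0 eta1] := andP eta01.
have [r0 r4 /andP[del0 delr] hr hdel] := defect_constants k0 eta01.
set r := defect_radius eta in r0 r4 delr hr hdel *.
set del := defect_margin k eta in del0 delr hdel *.
have [p [y0 [cp hy0]]] := not_strongly_convex_hess_form f2 nsc.
have [y ey hy] := hess_form_lt_normalize r0 hy0.
have [q [qb qp]] := cube_shift_interior cp r0 r4.
have yr i : `|y 0 i| <= r by apply: normr_coord_le_of_eucl2 => //; exact: ltW.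
have box_in s i : `|s| <= r -> del <= q 0 i + s <= 1 - del.
  by move: (qb i); rewrite ler_norml => /andP[? ?] /andP[? ?]; apply/andP; split; lra.
have box_cube (b x : 'rV[R]_d) : (forall i, del <= b 0 i <= 1 - del) ->
    (forall i, `|x 0 i - b 0 i| <= del) -> cube x.
  move=> bdel xb i; move: (bdel i) (xb i); rewrite ler_norml => /andP[? ?] /andP[? ?].
  by apply/andP; split; lra.
have b1del i : del <= (q - y) 0 i <= 1 - del by rewrite !mxE; apply: box_in; rewrite normrN.
have b2del i : del <= (q + y) 0 i <= 1 - del by rewrite !mxE; apply: box_in.
apply: (Pkappa_ge_box del0 _ b1del b2del) => [|x x' xb x'b].
  by rewrite divr_ge0 // mulr_ge0 ?sqr_ge0 // ltW.
apply: (midpoint_defect_ge_near (del := del) k0 _ _ cp ey hy qp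
  (box_cube _ _ b1del xb) (box_cube _ _ b2del x'b)).
- by rewrite (ltW del0) delr.
- by apply: defect_error_le; rewrite ?(ltW del0).
- by move=> i; have := xb i; rewrite !mxE.
- by move=> i; have := x'b i; rewrite !mxE.
Qed.
End DefectLowerBound.

Theorem proposition6 (R : realType) (d : nat) (hs : seq nat) (M eps Ht : R)
    (phi_eps : recu_net R d hs) :
  1 < M -> 0 < eps ->
  (forall x : 'rV[R]_d, cube x ->
     loewner_le ((2 * M)^-1 *: 1%:M) (hess (realize phi_eps) x) /\
     loewner_le (hess (realize phi_eps) x) ((2 * M) *: 1%:M)) ->
  (C21norm (realize phi_eps) <= Ht%:E)%E ->
  forall eta : R, 0 < eta < M^-1 / 2 ->
  exists zeta : R, 0 < zeta /\
    forall phi : recu_net R d hs,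
      (C21norm (realize phi) <= Ht%:E)%E ->
      ~ strongly_convex (M^-1 / 2 - eta) (realize phi) ->
      (zeta%:E <= Pkappa (M^-1 / 2) (realize phi))%E.
Proof.
move=> M1 _ _ phi_eps_Ht eta /andP[eta0 eta_lt].
have Ht0 : 0 <= Ht := C21norm_bound_ge0 phi_eps_Ht.
have kappa0 : 0 <= M^-1 / 2 by rewrite divr_ge0 // invr_ge0; lra.
have Minv1 : M^-1 < 1 by rewrite invf_lt1 //; lra.
have eta01 : 0 < eta <= 1 by apply/andP; split; lra.
exists (defect_floor d Ht (M^-1 / 2) eta); split; first exact: defect_floor_gt0.
move=> phi phi_Ht nsc.
apply: Pkappa_ge_defect_floor => //.
- exact: twice_differentiable_realize.
- by move=> z i j; exact: C21norm_partial2_le.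
- by move=> z z' i j; exact: C21norm_partial2_lipschitz.
Qed.
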